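(* Let $(S,d)$ be a stable metric space. Suppose that for every $r\in L^0_{++}$ there exist $s_r\in L^0_{++}$, a stable metric space $(S_r,d_r)$ (a stable subset of some stable $L^0$-module $E_r$), and a stable function $f_r:S\to S_r$ such that $f_r(S)$ is stable totally bounded and, for all $x,y\in S$, $d_r(f_r(x),f_r(y))\le s_r$ implies $d(x,y)\le r$. Then $S$ is stable totally bounded.
   Context: $L^0$: real measurable functions on a probability space modulo a.e. equality, a.e. order, $L^0_+=\{r\ge0\}$, $L^0_{++}=\{r>0\text{ a.e.}\}$. An $L^0$-module is stable if for each countable measurable partition $(A_k)$ and $(x_k)$ there is a unique $x=\sum_k1_{A_k}x_k$ with $1_{A_k}x=1_{A_k}x_k$; a nonempty subset closed under such concatenations is stable; a map $f$ is stable if $f(\sum_k1_{A_k}x_k)=\sum_k1_{A_k}f(x_k)$. $\mathrm{st}(X)$ is the set of all concatenations of elements of $X$. A subset $N$ of a stable set $S$ is stable finite if $N=\{\sum_k1_{A_k}y_k:y_k\in\mathrm{st}(X_k)\}$ for a countable measurable partition $(A_k)$ and finite nonempty $X_k\subset S$. A stable metric space is a stable set $S$ with a stable map $d:S\times S\to L^0_+$ satisfying $d(x,y)=0\iff x=y$, symmetry, triangle inequality; $B_r(x)=\{y:d(x,y)<r\}$. $S$ is stable totally bounded if for every $r\in L^0_{++}$ there is a stable finite $N\subset S$ with $S=\bigcup_{x\in N}B_r(x)$. *)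

From Stdlib Require Import Reals List ClassicalEpsilon.
Open Scope R_scope.
Set Implicit Arguments.

Record ProbSpace := {
  Omega : Type;
  meas : (Omega -> Prop) -> Prop;
  prob : (Omega -> Prop) -> R;
  meas_full : meas (fun _ => True);
  meas_compl : forall A, meas A -> meas (fun w => ~ A w);
  meas_cunion : forall A : nat -> Omega -> Prop,
      (forall n, meas (A n)) -> meas (fun w => exists n, A n w);
  prob_nonneg : forall A, meas A -> 0 <= prob A;
  prob_full : prob (fun _ => True) = 1;
  prob_cadd : forall A : nat -> Omega -> Prop,
      (forall n, meas (A n)) ->
      (forall i j w, A i w -> A j w -> i = j) ->
      infinite_sum (fun n => prob (A n)) (prob (fun w => exists n, A n w))
}.

Section L0.
Variable Ps : ProbSpace.
Local Notation Om := (Omega Ps).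

Definition ae (p : Om -> Prop) : Prop :=
  exists N, meas Ps N /\ prob Ps N = 0 /\ forall w, ~ N w -> p w.

(** measurable real functions: representatives of elements of L^0 *)
Definition measurable (f : Om -> R) : Prop :=
  forall a, meas Ps (fun w => f w < a).

Definition L0pp (r : Om -> R) : Prop := measurable r /\ ae (fun w => 0 < r w).

Definition ind (A : Om -> Prop) : Om -> R :=
  fun w => if excluded_middle_informative (A w) then 1 else 0.

(** countable measurable partitions (finite ones allowed via empty pieces) *)
Definition partition (A : nat -> Om -> Prop) : Prop :=
  (forall k, meas Ps (A k)) /\
  (forall w, exists k, A k w) /\
  (forall i j w, A i w -> A j w -> i = j).

(** L^0-modules: scalars are measurable functions, and a.e.-equal scalars act
    identically, i.e. a module over the quotient ring L^0. *)
Record L0Module (E : Type) := {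
  madd : E -> E -> E;
  mzero : E;
  mopp : E -> E;
  smul : (Om -> R) -> E -> E;
  madd_assoc : forall x y z, madd x (madd y z) = madd (madd x y) z;
  madd_comm : forall x y, madd x y = madd y x;
  madd_0 : forall x, madd x mzero = x;
  madd_opp : forall x, madd x (mopp x) = mzero;
  smul_ae : forall a b x, measurable a -> measurable b ->
      ae (fun w => a w = b w) -> smul a x = smul b x;
  smul_1 : forall x, smul (fun _ => 1) x = x;
  smul_mul : forall a b x, measurable a -> measurable b ->
      smul (fun w => a w * b w) x = smul a (smul b x);
  smul_addl : forall a b x, measurable a -> measurable b ->
      smul (fun w => a w + b w) x = madd (smul a x) (smul b x);
  smul_addr : forall a x y, measurable a ->
      smul a (madd x y) = madd (smul a x) (smul a y)
}.

Variables (E : Type) (M : L0Module E).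

(** x = sum_k 1_{A_k} x_k *)
Definition is_concat (A : nat -> Om -> Prop) (xs : nat -> E) (x : E) : Prop :=
  forall k, smul M (ind (A k)) x = smul M (ind (A k)) (xs k).

Definition stable_module : Prop :=
  forall A xs, partition A ->
    exists x, is_concat A xs x /\ forall y, is_concat A xs y -> y = x.

Definition stable_set (S : E -> Prop) : Prop :=
  (exists x, S x) /\
  forall A xs x, partition A -> (forall k, S (xs k)) -> is_concat A xs x -> S x.

Definition st (X : E -> Prop) : E -> Prop :=
  fun x => exists A xs, partition A /\ (forall k, X (xs k)) /\ is_concat A xs x.

Definition stable_finite (S N : E -> Prop) : Prop :=
  exists (A : nat -> Om -> Prop) (X : nat -> list E),
    partition A /\
    (forall k, X k <> nil /\ forall y, In y (X k) -> S y) /\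
    (forall x, N x <-> exists ys, (forall k, st (fun y => In y (X k)) (ys k))
                                  /\ is_concat A ys x).

(** stable metric on S; d returns representatives of elements of L^0 *)
Definition stable_metric (S : E -> Prop) (d : E -> E -> Om -> R) : Prop :=
  stable_set S /\
  (forall x y, S x -> S y -> measurable (d x y) /\ ae (fun w => 0 <= d x y w)) /\
  (forall A xs ys x y, partition A -> (forall k, S (xs k)) -> (forall k, S (ys k)) ->
     is_concat A xs x -> is_concat A ys y ->
     forall k, ae (fun w => A k w -> d x y w = d (xs k) (ys k) w)) /\
  (forall x y, S x -> S y -> (ae (fun w => d x y w = 0) <-> x = y)) /\
  (forall x y, S x -> S y -> ae (fun w => d x y w = d y x w)) /\
  (forall x y z, S x -> S y -> S z ->
     ae (fun w => d x z w <= d x y w + d y z w)).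

Definition ball (S : E -> Prop) (d : E -> E -> Om -> R) (r : Om -> R) (x : E)
  : E -> Prop := fun y => S y /\ ae (fun w => d x y w < r w).

Definition stable_totally_bounded (S : E -> Prop) (d : E -> E -> Om -> R) : Prop :=
  forall r, L0pp r ->
    exists N, (forall x, N x -> S x) /\ stable_finite S N /\
      forall y, S y <-> exists x, N x /\ ball S d r x y.

End L0.

Definition stable_fun (Ps : ProbSpace) (E E' : Type)
  (M : L0Module Ps E) (M' : L0Module Ps E') (S : E -> Prop) (S' : E' -> Prop)
  (f : E -> E') : Prop :=
  (forall x, S x -> S' (f x)) /\
  forall A xs x, partition Ps A -> (forall k, S (xs k)) -> is_concat M A xs x ->
    is_concat M' A (fun k => f (xs k)) (f x).

Definition image (E E' : Type) (f : E -> E') (S : E -> Prop) : E' -> Prop :=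
  fun y => exists x, S x /\ y = f x.

(* Given [r], apply the hypothesis with [r/2]: a stable finite [s]-net of
   [f(S)] is lifted back to [S] by choosing preimages of its finitely many
   generators.  Since [f] commutes with concatenation and concatenations in the
   target are unique, every element of the net is the image of a concatenation
   of lifted generators, and points of [S] whose images are [s]-close to it are
   within [r/2 < r] of that concatenation. *)
From Pilot Require Import Defs.
From Stdlib Require Import Reals Lra Lia List ClassicalEpsilon
  FunctionalExtensionality PropExtensionality.
Open Scope R_scope.

Section Null_sets.
Context {Ps : ProbSpace}.
Local Notation Om := (Omega Ps).

Lemma pred_ext {A B : Om -> Prop} : (forall w, A w <-> B w) -> A = B.
Proof. intros H. extensionality w. apply propositional_extensionality, H. Qed.

Lemma meas_ext (A B : Om -> Prop) :
  (forall w, A w <-> B w) -> meas Ps A -> meas Ps B.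
Proof. intros H HA. now rewrite <- (pred_ext H). Qed.

Lemma meas_empty : meas Ps (fun _ => False).
Proof.
  apply (meas_ext (fun w => ~ True)); [tauto|].
  apply meas_compl, meas_full.
Qed.

Lemma meas_union2 (A B : Om -> Prop) :
  meas Ps A -> meas Ps B -> meas Ps (fun w => A w \/ B w).
Proof.
  intros HA HB.
  set (C := fun n : nat => match n with 0%nat => A | _ => B end).
  apply (meas_ext (fun w => exists n, C n w)).
  - intros w; split.
    + intros [[|n] Hn]; simpl in Hn; tauto.
    + intros [H|H]; [exists 0%nat | exists 1%nat]; exact H.
  - apply meas_cunion. intros [|n]; assumption.
Qed.

Lemma meas_diff (A B : Om -> Prop) :
  meas Ps A -> meas Ps B -> meas Ps (fun w => A w /\ ~ B w).
Proof.
  intros HA HB. apply (meas_ext (fun w => ~ (~ A w \/ B w))).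
  - intros w. destruct (classic (A w)); tauto.
  - apply meas_compl, meas_union2; [apply meas_compl|]; assumption.
Qed.

Lemma sum_f_R0_const (c : R) (n : nat) : sum_f_R0 (fun _ => c) n = INR (S n) * c.
Proof.
  induction n as [|n IH]; simpl sum_f_R0; [simpl; lra|].
  rewrite IH, !S_INR. lra.
Qed.

(* Countable additivity for the constant family of empty sets says that
   [n * prob empty] converges to [prob empty]. *)
Lemma prob_empty : prob Ps (fun _ => False) = 0.
Proof.
  pose proof (prob_cadd Ps (fun _ _ => False) (fun _ => meas_empty)
                (fun i j w F _ => False_ind _ F)) as Hsum.
  cbv beta in Hsum.
  replace (fun w : Om => exists _ : nat, False) with (fun _ : Om => False) in Hsum
    by (apply pred_ext; intros w; split; [tauto | intros [_ F]; exact F]).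
  set (c := prob Ps (fun _ => False)) in *.
  destruct (Req_dec c 0) as [Hc|Hc]; [exact Hc|exfalso].
  pose proof (Rabs_pos_lt c Hc) as Hpos.
  destruct (Hsum (Rabs c / 2)) as [N HN]; [lra|].
  specialize (HN (S N) (le_S _ _ (le_n N))).
  rewrite sum_f_R0_const in HN. unfold R_dist in HN.
  replace (INR (S (S N)) * c - c) with (INR (S N) * c) in HN
    by (rewrite (S_INR (S N)); lra).
  rewrite Rabs_mult, Rabs_right in HN by apply Rle_ge, pos_INR.
  rewrite S_INR in HN. pose proof (pos_INR N). nra.
Qed.

Lemma prob_union2_disjoint (A B : Om -> Prop) :
  meas Ps A -> meas Ps B -> (forall w, A w -> B w -> False) ->
  prob Ps (fun w => A w \/ B w) = prob Ps A + prob Ps B.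
Proof.
  intros HA HB Hdisj.
  set (C := fun n : nat =>
              match n with 0%nat => A | 1%nat => B | _ => fun _ => False end).
  assert (HC : (fun w => exists n, C n w) = fun w => A w \/ B w).
  { apply pred_ext. intros w; split.
    - intros [[|[|n]] Hn]; simpl in Hn; tauto.
    - intros [H|H]; [exists 0%nat | exists 1%nat]; exact H. }
  pose proof (prob_cadd Ps C) as Hsum. rewrite HC in Hsum.
  apply (uniqueness_sum (fun n => prob Ps (C n))).
  - apply Hsum.
    + intros [|[|n]]; simpl; auto using meas_empty.
    + intros [|[|i]] [|[|j]] w Hi Hj; simpl in *; try tauto; exfalso; eauto.
  - intros eps Heps. exists 1%nat. intros n Hn.
    assert (Hpartial : sum_f_R0 (fun n => prob Ps (C n)) n = prob Ps A + prob Ps B).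
    { induction n as [|n IH]; [lia|]. destruct n; [reflexivity|].
      simpl sum_f_R0 in *. rewrite IH by lia. simpl C. rewrite prob_empty. lra. }
    rewrite Hpartial. unfold R_dist. rewrite Rminus_diag, Rabs_R0. exact Heps.
Qed.

Lemma ae_and {P Q : Om -> Prop} : ae Ps P -> ae Ps Q -> ae Ps (fun w => P w /\ Q w).
Proof.
  intros [N1 [m1 [p1 h1]]] [N2 [m2 [p2 h2]]].
  exists (fun w => N1 w \/ N2 w).
  split; [apply meas_union2; assumption|]. split.
  - assert (mD : meas Ps (fun w => N2 w /\ ~ N1 w)) by (apply meas_diff; assumption).
    assert (mI : meas Ps (fun w => N2 w /\ ~ ~ N1 w))
      by (apply meas_diff; [|apply meas_compl]; assumption).
    assert (Hsplit : prob Ps N2 =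
              prob Ps (fun w => N2 w /\ ~ N1 w) + prob Ps (fun w => N2 w /\ ~ ~ N1 w)).
    { rewrite <- prob_union2_disjoint by (auto; intros w; tauto).
      f_equal. apply pred_ext. intros w. destruct (classic (N1 w)); tauto. }
    replace (fun w => N1 w \/ N2 w) with (fun w => N1 w \/ (N2 w /\ ~ N1 w))
      by (apply pred_ext; intros w; tauto).
    rewrite prob_union2_disjoint by (auto; intros w; tauto).
    pose proof (prob_nonneg Ps _ mD). pose proof (prob_nonneg Ps _ mI). lra.
  - intros w Hw. split; [apply h1 | apply h2]; tauto.
Qed.

Lemma ae_mono (P Q : Om -> Prop) : (forall w, P w -> Q w) -> ae Ps P -> ae Ps Q.
Proof. intros H [N [m [p h]]]. exists N. auto. Qed.

Lemma L0pp_half {r : Om -> R} : L0pp Ps r -> L0pp Ps (fun w => r w / 2).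
Proof.
  intros [Hm Hpos]. split.
  - intros a. apply (meas_ext (fun w => r w < 2 * a)); [intros w; lra|]. apply Hm.
  - eapply ae_mono; [|exact Hpos]. intros w Hw. simpl. lra.
Qed.

Lemma ae_lt_of_le_half (r : Om -> R) (u : Om -> R) :
  L0pp Ps r -> ae Ps (fun w => u w <= r w / 2) -> ae Ps (fun w => u w < r w).
Proof.
  intros [_ Hpos] Hle.
  eapply ae_mono; [|exact (ae_and Hle Hpos)]. intros w [H1 H2]. lra.
Qed.

End Null_sets.

Section Lifting.
Context {Ps : ProbSpace} {E Er : Type} {M : L0Module Ps E} {Mr : L0Module Ps Er}
  {S : E -> Prop} {Sr : Er -> Prop} {f : E -> Er}.
Hypotheses (HM : stable_module M) (HMr : stable_module Mr) (HS : stable_set M S)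
  (Hf : stable_fun M Mr S Sr f).

Lemma concat_unique (A : nat -> Omega Ps -> Prop) (ys : nat -> Er) (y y' : Er) :
  Defs.partition Ps A -> is_concat Mr A ys y -> is_concat Mr A ys y' -> y = y'.
Proof.
  intros HA Hy Hy'. destruct (HMr A ys HA) as [u [_ Hu]].
  now rewrite (Hu y Hy), (Hu y' Hy').
Qed.

Lemma stable_set_st {X : E -> Prop} : (forall x, X x -> S x) -> forall x, st M X x -> S x.
Proof. intros HX x (A & xs & HA & Hxs & Hx). apply (proj2 HS A xs x HA); auto. Qed.

Lemma concat_lift {A : nat -> Omega Ps -> Prop} (xs : nat -> E) {ys : nat -> Er} {y : Er} :
  Defs.partition Ps A -> (forall k, S (xs k)) -> (forall k, f (xs k) = ys k) ->
  is_concat Mr A ys y -> exists x, is_concat M A xs x /\ S x /\ f x = y.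
Proof.
  intros HA HSxs Hfxs Hy. destruct (HM A xs HA) as [x [Hx _]].
  exists x. split; [exact Hx|]. split; [exact (proj2 HS A xs x HA HSxs Hx)|].
  apply (concat_unique A ys); [exact HA| |exact Hy].
  intros k. rewrite <- Hfxs. exact (proj2 Hf A xs x HA HSxs Hx k).
Qed.

Lemma st_lift {X : E -> Prop} {Xr : Er -> Prop} {g : Er -> E} :
  (forall y, Xr y -> X (g y) /\ S (g y) /\ f (g y) = y) ->
  forall y, st Mr Xr y -> exists x, st M X x /\ S x /\ f x = y.
Proof.
  intros Hg y (B & zs & HB & Hzs & Hy).
  destruct (concat_lift (fun j => g (zs j)) HB (fun j => proj1 (proj2 (Hg _ (Hzs j))))
              (fun j => proj2 (proj2 (Hg _ (Hzs j)))) Hy) as (x & Hx & HSx & Hfx).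
  exists x. split; [|auto]. exists B, (fun j => g (zs j)).
  split; [exact HB|]. split; [|exact Hx]. intros j. apply Hg, Hzs.
Qed.

Lemma image_section : inhabited E ->
  exists g : Er -> E, forall y, image f S y -> S (g y) /\ f (g y) = y.
Proof.
  intros Hinh. exists (fun y => epsilon Hinh (fun x => S x /\ f x = y)).
  intros y Hy. apply (epsilon_spec Hinh (fun x => S x /\ f x = y)).
  destruct Hy as [x [HSx ->]]. eauto.
Qed.

Lemma stable_finite_lift {N' : Er -> Prop} :
  stable_finite Mr (image f S) N' ->
  exists N : E -> Prop, (forall x, N x -> S x) /\ stable_finite M S N /\
    forall y, N' y -> exists x, N x /\ f x = y.
Proof.
  intros (A & X & HA & HX & HN').
  destruct (proj1 HS) as [x0 _].
  destruct (image_section (inhabits x0)) as [g Hg].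
  set (Xl := fun k x => In x (map g (X k))).
  assert (HXl : forall k y, In y (X k) -> Xl k (g y) /\ S (g y) /\ f (g y) = y).
  { intros k y Hy. split; [apply in_map, Hy|]. apply Hg, (proj2 (HX k)), Hy. }
  assert (HXlS : forall k x, Xl k x -> S x).
  { intros k x Hx. apply in_map_iff in Hx. destruct Hx as [y [<- Hy]]. apply HXl with k, Hy. }
  set (N := fun x => exists xs, (forall k, st M (Xl k) (xs k)) /\ is_concat M A xs x).
  exists N. split; [|split].
  - intros x [xs [Hxs Hx]]. apply (proj2 HS A xs x HA); [|exact Hx].
    intros k. exact (stable_set_st (HXlS k) _ (Hxs k)).
  - exists A, (fun k => map g (X k)). split; [exact HA|]. split; [|intros; tauto].
    intros k. split; [|exact (HXlS k)].
    destruct (HX k) as [Hne _]. destruct (X k); simpl; congruence.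
  - intros y Hy. destruct (proj1 (HN' y) Hy) as [ys [Hys Hy']].
    assert (Hlift : forall k, exists x, st M (Xl k) x /\ S x /\ f x = ys k)
      by (intros k; exact (st_lift (HXl k) _ (Hys k))).
    destruct (choice _ Hlift) as [xs Hxs].
    destruct (concat_lift xs HA (fun k => proj1 (proj2 (Hxs k)))
                (fun k => proj2 (proj2 (Hxs k))) Hy') as (x & Hx & _ & Hfx).
    exists x. split; [|exact Hfx]. exists xs. split; [intros k; apply Hxs | exact Hx].
Qed.

End Lifting.

Theorem lemma6 (Ps : ProbSpace) (E : Type) (M : L0Module Ps E)
  (S : E -> Prop) (d : E -> E -> Omega Ps -> R) :
  stable_module M ->
  stable_metric M S d ->
  (forall r : Omega Ps -> R, L0pp Ps r ->
     exists (s : Omega Ps -> R) (Er : Type) (Mr : L0Module Ps Er)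
            (Sr : Er -> Prop) (dr : Er -> Er -> Omega Ps -> R) (f : E -> Er),
       L0pp Ps s /\ stable_module Mr /\ stable_metric Mr Sr dr /\
       stable_fun M Mr S Sr f /\
       stable_totally_bounded Mr (image f S) dr /\
       (forall x y, S x -> S y ->
          ae Ps (fun w => dr (f x) (f y) w <= s w) ->
          ae Ps (fun w => d x y w <= r w))) ->
  stable_totally_bounded M S d.
Proof.
  intros HM [HS _] Hcomp r Hr.
  destruct (Hcomp _ (L0pp_half Hr))
    as (s & Er & Mr & Sr & dr & f & Hs & HMr & _ & Hf & Htb & Hclose).
  destruct (Htb s Hs) as (N' & _ & HN'fin & HN'cov).
  destruct (stable_finite_lift HM HMr HS Hf HN'fin) as (N & HNS & HNfin & HNlift).
  exists N. split; [exact HNS|]. split; [exact HNfin|].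
  intros z. split; [|intros (x & _ & HSz & _); exact HSz].
  intros HSz.
  destruct (proj1 (HN'cov (f z)) (ex_intro _ z (conj HSz eq_refl)))
    as (y & HN'y & _ & Hball).
  destruct (HNlift y HN'y) as (x & HNx & <-).
  exists x. split; [exact HNx|]. split; [exact HSz|].
  apply ae_lt_of_le_half; [exact Hr|].
  apply Hclose; [apply HNS; exact HNx | exact HSz |].
  eapply ae_mono; [|exact Hball]. intros w Hw. lra.
Qed.
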